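(* Let $L\in R[x][\partial]$ have order $r>0$. The set $I\subseteq R$ consisting of $0$ together with all contents of leading coefficients $\mathrm{lc}_\partial(T)$ of desingularized operators $T$ for $L$ is an ideal of $R$.
   Context: $R$ is a principal ideal domain with quotient field $Q_R$; $\sigma$ is an $R$-automorphism of $R[x]$ with $\sigma(x)=\gamma x+\tau$ ($\gamma$ a unit), $\delta$ an $R$-linear $\sigma$-derivation with $\deg\delta(x)\le1$; $R[x][\partial]$ is the Ore algebra with $\partial p=\sigma(p)\partial+\delta(p)$, inside $Q_R(x)[\partial]$. Each nonzero $f\in R[x]$ equals $cg$ with $c\in R$ (a content, unique up to units) and $g$ primitive. $\mathrm{cont}(L)=Q_R(x)[\partial]L\cap R[x][\partial]$. For $p\in R[x]$ dividing $\mathrm{lc}_\partial(L)$: $p$ is removable from $L$ at order $k$ if there are $P\in Q_R(x)[\partial]$ of order $k$ and $w,v\in R[x]$ with $\gcd(p,w)=1$ such that $PL\in R[x][\partial]$ and $\sigma^{-k}(\mathrm{lc}_\partial(PL))=\frac{w}{vp}\mathrm{lc}_\partial(L)$; non-removable if removable at no order. If $\mathrm{lc}_\partial(L)=c\,p_1^{e_1}\cdots p_m^{e_m}$ ($c\in R$, $p_i\in R[x]\setminus R$ irreducible and pairwise coprime), $T\in R[x][\partial]$ of order $k$ is desingularized for $L$ if $T\in\mathrm{cont}(L)$ and $\sigma^{r-k}(\mathrm{lc}_\partial(T))=\frac{a}{b\,p_1^{k_1}\cdots p_m^{k_m}}\mathrm{lc}_\partial(L)$ with $a,b\in R$, $b\ne0$,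 and $p_i^{d_i}$ non-removable from $L$ for all integers $d_i>k_i$. *)

From HB Require Import structures.
From mathcomp Require Import all_boot all_order all_algebra.
Set Implicit Arguments. Unset Strict Implicit. Unset Printing Implicit Defensive.
Import Order.TTheory GRing.Theory Num.Theory.
Local Open Scope ring_scope.

Section RingNotions.
Variable A : comUnitRingType.

Definition dvdr (a b : A) : Prop := exists c, b = c * a.

Definition is_ideal (I : A -> Prop) : Prop :=
  [/\ I 0, (forall a b, I a -> I b -> I (a + b)) & (forall c a, I a -> I (c * a))].

Definition principal_ideal_ring : Prop :=
  forall I, is_ideal I -> exists g, forall a, I a <-> dvdr g a.

Definition irreducible_elt (x : A) : Prop :=
  [/\ x != 0, x \isn't a GRing.unit &
      forall a b, x = a * b -> a \is a GRing.unit \/ b \is a GRing.unit].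

Definition coprime_elt (a b : A) : Prop :=
  forall d, dvdr d a -> dvdr d b -> d \is a GRing.unit.
End RingNotions.

Section Ore.
Variable R : idomainType.
Local Notation RX := {poly R}.
Local Notation K := {fraction {poly R}}.
Local Notation toK := (@FracField.tofrac {poly R}).

Definition primitive (g : RX) : Prop :=
  forall d : R, (forall i, dvdr d g`_i) -> d \is a GRing.unit.

Definition is_content (c : R) (f : RX) : Prop :=
  exists g, primitive g /\ f = c *: g.

Variables (gamma tau : R).
Definition sigmaP (p : RX) : RX := p \Po (gamma%:P * 'X + tau%:P).
Definition sigmaPinv (p : RX) : RX := p \Po (gamma^-1%:P * ('X - tau%:P)).
Definition sigma_int (n : int) (p : RX) : RX :=
  match n with
  | Posz m => iter m sigmaP p
  | Negz m => iter m.+1 sigmaPinv p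
  end.

(* Ore operators: sum_i Q`_i d^i is represented by the polynomial Q
   (coefficient i = coefficient of d^i); order = (size Q).-1, lc = lead_coef Q *)
Variable delta : RX -> RX.

(* d * Q  for Q in R[x][d], using d q = sigma(q) d + delta(q) *)
Definition dmul (Q : {poly RX}) : {poly RX} :=
  'X * map_poly sigmaP Q + map_poly delta Q.

Definition oreMul (P : {poly K}) (L : {poly RX}) : {poly K} :=
  \sum_(i < size P) P`_i *: map_poly toK (iter i dmul L).

Variable L : {poly RX}.

(* T in cont(L) = Q_R(x)[d] L  cap  R[x][d] *)
Definition in_cont (T : {poly RX}) : Prop :=
  exists P : {poly K}, map_poly toK T = oreMul P L.

Definition removable_at (k : nat) (p : RX) : Prop :=
  dvdr p (lead_coef L) /\
  exists (P : {poly K}) (T : {poly RX}) (w v : RX),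
    [/\ size P = k.+1, map_poly toK T = oreMul P L,
        coprime_elt p w, v != 0 &
        toK (sigma_int (- (k%:Z)) (lead_coef T))
          = toK w / (toK v * toK p) * toK (lead_coef L)].

Definition non_removable (p : RX) : Prop := ~ exists k, removable_at k p.

Definition desingularized (T : {poly RX}) : Prop :=
  T != 0 /\ in_cont T /\
  exists (c : R) (m : nat) (ps : 'I_m -> RX) (es : 'I_m -> nat),
    [/\ lead_coef L = c%:P * \prod_(i < m) ps i ^+ es i,
        (forall i, 0 < es i)%N,
        (forall i, irreducible_elt (ps i) /\ (1 < size (ps i))%N),
        (forall i j, i != j -> coprime_elt (ps i) (ps j)) &
        exists (a b : R) (ks : 'I_m -> nat),
          [/\ b != 0,
              toK (sigma_int ((size L).-1%:Z - (size T).-1%:Z) (lead_coef T))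
                = toK a%:P / (toK b%:P * toK (\prod_(i < m) ps i ^+ ks i))
                  * toK (lead_coef L) &
              forall i (d : nat), (ks i < d)%N -> non_removable (ps i ^+ d)]].
End Ore.

(** Everything rests on unique factorisation in R[x] over the principal ideal
    domain R: Gauss's lemma for primitive polynomials and the primality of
    irreducible nonconstant polynomials.  Multiplying a desingularized operator
    by a constant c keeps it desingularized and multiplies the content by c.
    For a sum, the operator of lower order is first multiplied on the left by a
    power of the derivation; this only applies sigma to its leading coefficient,
    so it stays desingularized with the same content.  For two desingularized
    operators T1, T2 of the same order, the products p_1^k_1 ... p_m^k_m of
    their bounds divide each other, because a factor p_i^(k_i + 1) would make
    that power removable from L.  Hence the primitive parts of lc(T1) and lc(T2)
    agree up to a unit u, and T1 + u T2 is desingularized with content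
    x1 + x2 whenever x1 + x2 is nonzero. *)

From mathcomp Require Import all_boot all_algebra.
From mathcomp Require Import ring zify.
From Stdlib Require Import Classical ClassicalEpsilon.
Import GRing.Theory.
Local Open Scope ring_scope.

Set Implicit Arguments. Unset Strict Implicit. Unset Printing Implicit Defensive.

Lemma classic_ex_minn (P : nat -> Prop) :
  (exists n, P n) -> exists2 n, P n & forall m, P m -> (n <= m)%N.
Proof.
move=> [n Pn].
pose b m := if excluded_middle_informative (P m) then true else false.
have bP m : reflect (P m) (b m) by rewrite /b; case: excluded_middle_informative; constructor.
have [m /bP Pm m_min] := ex_minnP (ex_intro b n (introT (bP n) Pn)).
by exists m => // k /bP /m_min.
Qed.

(** * Divisibility *)

Section Divisibility.
Variable A : comUnitRingType.
Implicit Types a b c u : A.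

Definition prime_elt (q : A) : Prop :=
  q \isn't a GRing.unit /\ forall a b, dvdr q (a * b) -> dvdr q a \/ dvdr q b.

Lemma dvdrr a : dvdr a a. Proof. by exists 1; rewrite mul1r. Qed.

Lemma dvdr0 a : dvdr a 0. Proof. by exists 0; rewrite mul0r. Qed.

Lemma dvdr_trans a b c : dvdr a b -> dvdr b c -> dvdr a c.
Proof. by move=> [x ->] [y ->]; exists (y * x); rewrite mulrA. Qed.

Lemma dvdr_mull a b c : dvdr a b -> dvdr a (c * b).
Proof. by move=> [x ->]; exists (c * x); rewrite mulrA. Qed.

Lemma dvdr_mulr a b c : dvdr a b -> dvdr a (b * c).
Proof. by rewrite mulrC; apply: dvdr_mull. Qed.

Lemma dvdr_mulIl a b : dvdr a (a * b). Proof. by exists b; rewrite mulrC. Qed.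

Lemma dvdr_mulIr a b : dvdr b (a * b). Proof. by exists a. Qed.

Lemma dvdrD a b c : dvdr a b -> dvdr a c -> dvdr a (b + c).
Proof. by move=> [x ->] [y ->]; exists (x + y); rewrite mulrDl. Qed.

Lemma dvdrN a b : dvdr a b -> dvdr a (- b).
Proof. by move=> [x ->]; exists (- x); rewrite mulNr. Qed.

Lemma dvdr_sum (I : Type) (r : seq I) (P : pred I) (F : I -> A) a :
  (forall i, P i -> dvdr a (F i)) -> dvdr a (\sum_(i <- r | P i) F i).
Proof. by move=> aF; elim/big_ind: _ => //; [apply: dvdr0 | apply: dvdrD]. Qed.

Lemma dvdr_unit a u : dvdr a u -> u \is a GRing.unit -> a \is a GRing.unit.
Proof. by move=> [x ->]; rewrite unitrM => /andP[]. Qed.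

End Divisibility.

Section IdomainDivisibility.
Variable A : idomainType.
Implicit Types a b p x y z : A.

Lemma dvdr_mul2r a b c : c != 0 -> dvdr (a * c) (b * c) -> dvdr a b.
Proof. by move=> c0 [x]; rewrite mulrA => /(mulIf c0) ->; exists x. Qed.

Lemma mul_dvdr_unit a b : a != 0 -> dvdr (b * a) a -> b \is a GRing.unit.
Proof.
move=> a0 [x]; rewrite -{1}[a]mul1r mulrA => /(mulIf a0) x1.
by apply/unitrP; exists x; rewrite x1 mulrC.
Qed.

Lemma prime_expn_dvdr p x z n : prime_elt p -> p != 0 -> ~ dvdr p z ->
  dvdr (p ^+ n) (x * z) -> dvdr (p ^+ n) x.
Proof.
move=> [_ p_prime] p0 pNz; elim: n x => [|n IH] x.
  by rewrite expr0 => _; exists x; rewrite mulr1.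
move=> pnxz; have /p_prime [[x1 xE]|//] : dvdr p (x * z).
  by apply: dvdr_trans pnxz; rewrite exprSr; apply: dvdr_mulIr.
rewrite xE in pnxz *; have [y ->] : dvdr (p ^+ n) x1.
  by apply: IH; apply: (dvdr_mul2r p0); rewrite -exprSr mulrAC.
by rewrite exprSr; exists y; rewrite mulrA.
Qed.

Lemma dvdr_expn_drop p x y e f : prime_elt p -> p != 0 -> ~ dvdr (p ^+ f.+1) x ->
  dvdr x (p ^+ e * y) -> dvdr x (p ^+ f * y).
Proof.
move=> pp p0 pNx; elim: e => [|e IH] [z xzE].
  by rewrite expr0 mul1r in xzE; rewrite xzE; apply/dvdr_mull/dvdr_mulIr.
have [ef|fe] := leqP e.+1 f.
  by rewrite -(subnK ef) exprD -mulrA xzE; apply/dvdr_mull/dvdr_mulIr.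
have [[z1 zE]|pNz] := classic (dvdr p z).
  apply: IH; exists z1; apply: (mulIf p0).
  by rewrite mulrAC -exprSr xzE zE mulrAC.
exfalso; apply: pNx; apply: dvdr_trans (prime_expn_dvdr pp p0 pNz _).
  by exists (p ^+ (e.+1 - f.+1)); rewrite -exprD subnK.
by rewrite mulrC -xzE; apply: dvdr_mulIl.
Qed.

Lemma dvdr_big_expn_drop (I : Type) (s : seq I) (p : I -> A) (e k : I -> nat) x y :
  (forall i, prime_elt (p i)) -> (forall i, p i != 0) ->
  (forall i, ~ dvdr (p i ^+ (k i).+1) x) ->
  dvdr x ((\prod_(i <- s) p i ^+ e i) * y) -> dvdr x ((\prod_(i <- s) p i ^+ k i) * y).
Proof.
move=> pp p0 pNx; elim: s y => [|i s IH] y; first by rewrite !big_nil.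
rewrite !big_cons -!mulrA => /(dvdr_expn_drop (pp i) (p0 i) (pNx i)).
by rewrite mulrCA => /IH; rewrite mulrCA.
Qed.

End IdomainDivisibility.

Section PrincipalIdealDomain.
Variable R : idomainType.
Hypothesis hPID : principal_ideal_ring R.
Implicit Types a b e x y : R.

Lemma dvdr_chain_stationary (s : nat -> R) :
  (forall n, dvdr (s n.+1) (s n)) -> exists n, dvdr (s n) (s n.+1).
Proof.
move=> sS.
have sD n k : dvdr (s (k + n)%N) (s n).
  by elim: k => [|k IH]; [apply: dvdrr | apply: dvdr_trans (sS _) IH].
pose U z := exists n, dvdr (s n) z.
have U_ideal : is_ideal U.
  split; first by exists 0%N; apply: dvdr0.
    move=> a b [n1 H1] [n2 H2]; exists (maxn n1 n2); apply: dvdrD.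
      by apply: dvdr_trans H1; rewrite -(subnK (leq_maxl n1 n2)); apply: sD.
    by apply: dvdr_trans H2; rewrite -(subnK (leq_maxr n1 n2)); apply: sD.
  by move=> c z [n H]; exists n; apply: dvdr_mull.
have [g Ug] := hPID U_ideal.
have [n sn_g] : U g by apply/Ug/dvdrr.
by exists n; apply: dvdr_trans sn_g _; apply/Ug; exists n.+1; apply: dvdrr.
Qed.

Lemma prime_of_maximal x : x \isn't a GRing.unit ->
  (forall y, dvdr y x -> y \is a GRing.unit \/ dvdr x y) -> prime_elt x.
Proof.
move=> xNU x_max; split=> // a b xab.
have [xa|xNa] := classic (dvdr x a); [by left | right].
pose J z := exists s t, z = s * x + t * a.
have J_ideal : is_ideal J.
  split; first by exists 0, 0; rewrite !mul0r addr0.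
    by move=> _ _ [s1 [t1 ->]] [s2 [t2 ->]]; exists (s1 + s2), (t1 + t2); ring.
  by move=> c _ [s [t ->]]; exists (c * s), (c * t); ring.
have [g Jg] := hPID J_ideal.
have gx : dvdr g x by apply/Jg; exists 1, 0; ring.
have ga : dvdr g a by apply/Jg; exists 0, 1; ring.
have [gU|xg] := x_max g gx; last by case: xNa; apply: dvdr_trans xg ga.
have [s [t gE]] : J g by apply/Jg/dvdrr.
have -> : b = g^-1 * ((s * b) * x + t * (a * b)).
  by rewrite (_ : _ + _ = g * b) ?mulKr // gE; ring.
by apply/dvdr_mull/dvdrD; [apply: dvdr_mulIr | apply: dvdr_mull].
Qed.

Lemma exists_prime_dvdr e : e \isn't a GRing.unit -> exists2 q, prime_elt q & dvdr q e.
Proof.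
(* Otherwise the divisors of e would contain an infinite strictly decreasing chain. *)
move=> eNU; apply: NNPP => no_prime.
pose P x := x \isn't a GRing.unit /\ dvdr x e.
pose Q x y := [/\ P y, dvdr y x & ~ dvdr x y].
have step x : P x -> exists y, Q x y.
  move=> [xNU xe]; apply: NNPP => no_step; apply: no_prime; exists x => //.
  apply: prime_of_maximal => // y yx.
  have [yU|yNU] := boolP (y \is a GRing.unit); [by left | right].
  apply: NNPP => xNy; apply: no_step; exists y; split => //.
  by split=> //; apply: dvdr_trans yx xe.
pose next x := epsilon (inhabits 0) (Q x).
pose s n := iter n next e.
have sP n : P (s n).
  elim: n => [|n IH]; first by split=> //; apply: dvdrr.
  by have [] := epsilon_spec (inhabits 0) (Q (s n)) (step _ IH).
have sQ n : Q (s n) (s n.+1) := epsilon_spec (inhabits 0) (Q (s n)) (step _ (sP n)).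
have [n sn_sn1] : exists n, dvdr (s n) (s n.+1).
  by apply: dvdr_chain_stationary => n; case: (sQ n).
by case: (sQ n).
Qed.

End PrincipalIdealDomain.

(** * Contents and primitive polynomials *)

Section Content.
Variable R : idomainType.
Hypothesis hPID : principal_ideal_ring R.
Local Notation RX := {poly R}.
Implicit Types (a c d : R) (f g h : RX).

Lemma coefs_dvdr_scale d h : (forall i, dvdr d h`_i) -> exists h', h = d *: h'.
Proof.
move=> dh; have dh' i : exists c, h`_i == c * d by have [c ->] := dh i; exists c.
exists (\poly_(i < size h) xchoose (dh' i)); apply/polyP=> i.
rewrite coefZ coef_poly; case: ltnP => hi; last by rewrite mulr0 nth_default.
by rewrite mulrC; apply/eqP; exact: xchooseP (dh' i).
Qed.

Lemma primitive_neq0 g : primitive g -> g != 0.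
Proof.
move=> pg; apply/eqP=> g0; suff : (0 : R) \is a GRing.unit by rewrite unitr0.
by apply: pg => i; rewrite g0 coef0; apply: dvdr0.
Qed.

Lemma scale_polyI a f g : a != 0 -> a *: f = a *: g -> f = g.
Proof. by move=> a0; rewrite -!mul_polyC; apply: mulfI; rewrite polyC_eq0. Qed.

Lemma prime_dvdr_coefM q g h : prime_elt q -> primitive g ->
  (forall k, dvdr q (g * h)`_k) -> forall k, dvdr q h`_k.
Proof.
move=> [qNU q_prime] pg qgh; apply: NNPP => /not_all_ex_not exNh.
have [i qNgi i_min] : exists2 i, ~ dvdr q g`_i & forall i', ~ dvdr q g`_i' -> (i <= i')%N.
  apply: classic_ex_minn; apply: NNPP => /not_ex_not_all qg.
  by move/negP: qNU; apply; apply: pg => i; apply: NNPP.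
have [j qNhj j_min] := classic_ex_minn exNh.
have q_low (F : nat -> R) m : (forall m', ~ dvdr q (F m') -> (m <= m')%N) ->
    forall m', (m' < m)%N -> dvdr q (F m').
  by move=> F_min m' m'm; apply: NNPP => /F_min; rewrite leqNgt m'm.
(* Only the term g_i h_j of the coefficient of index i + j escapes q. *)
have ij : (i < (i + j).+1)%N by rewrite ltnS leq_addr.
have := qgh (i + j)%N; rewrite coefM (bigD1 (Ordinal ij)) //= addKn => q_sum.
set S := \sum_(k < _ | _) _ in q_sum.
have qS : dvdr q S.
  apply: dvdr_sum => k kNi; have [ki|ik|ki] := ltngtP k i.
  - by apply/dvdr_mulr/(q_low _ _ i_min).
  - by apply/dvdr_mull/(q_low _ _ j_min); rewrite ltn_subLR ?ltn_add2r // -ltnS ltn_ord.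
  - by move/eqP: kNi; case; apply: val_inj.
have : dvdr q (g`_i * h`_j) by rewrite -(addrK S (_ * _)); apply/dvdrD/dvdrN.
by case/q_prime.
Qed.

Lemma gauss_primitive a f g h : primitive g -> a != 0 -> a *: f = g * h ->
  exists2 h', h = a *: h' & f = g * h'.
Proof.
move=> pg a0 E.
suff [h' hE] : exists h', h = a *: h'.
  by exists h' => //; apply: (scale_polyI a0); rewrite E hE scalerAr.
pose J x := forall i, dvdr a (x * h`_i).
have J_ideal : is_ideal J.
  split; first by move=> i; rewrite mul0r; apply: dvdr0.
    by move=> x y Jx Jy i; rewrite mulrDl; apply: dvdrD.
  by move=> c x Jx i; rewrite -mulrA; apply: dvdr_mull.
have [e J_dvdr] := hPID J_ideal.
have Je : J e by apply/J_dvdr/dvdrr.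
have e0 : e != 0.
  apply: contra_neq a0 => e0; have [c ->] : dvdr e a by apply/J_dvdr => i; apply: dvdr_mulIl.
  by rewrite e0 mulr0.
(* A prime factor q of e = e' q could be cancelled: e' would lie in J too. *)
have [eU|/(exists_prime_dvdr hPID) [q q_prime [e' eE]]] := boolP (e \is a GRing.unit).
  by apply: coefs_dvdr_scale => i; rewrite -(mulKr eU h`_i); apply: dvdr_mull.
have [q0 e'0] : q != 0 /\ e' != 0 by apply/andP; rewrite -negb_or -mulf_eq0 mulrC -eE.
have [/negP qNU _] := q_prime; exfalso; apply: qNU.
have [Z hZ] : exists Z, (q * e') *: h = a *: Z.
  by apply: coefs_dvdr_scale => i; rewrite coefZ [q * e']mulrC -eE; apply: Je.
have gZ : g * Z = (q * e') *: f.
  apply: (scale_polyI a0); rewrite scalerAr -hZ -scalerAr -E !scalerA.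
  by congr (_ *: _); ring.
have [W ZE] : exists W, Z = q *: W.
  apply/coefs_dvdr_scale/(prime_dvdr_coefM q_prime pg) => i.
  by rewrite gZ coefZ -mulrA; apply: dvdr_mulIl.
have Je' : J e'.
  have e'h : e' *: h = a *: W.
    by apply: (scale_polyI q0); rewrite scalerA hZ ZE !scalerA mulrC.
  by move=> i; rewrite -coefZ e'h coefZ; apply: dvdr_mulIl.
apply: (mul_dvdr_unit e'0); rewrite mulrC -eE; exact/J_dvdr.
Qed.

Lemma primitive_dvdr_scale a f g : primitive g -> a != 0 -> dvdr g (a *: f) -> dvdr g f.
Proof.
move=> pg a0 [h E]; rewrite mulrC in E.
by have [h' _ ->] := gauss_primitive pg a0 E; apply: dvdr_mulIl.
Qed.

Lemma content_decomposition h : h != 0 ->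
  exists c g, [/\ c != 0, primitive g & h = c *: g].
Proof.
move=> h0.
pose J x := forall d, (forall i, dvdr d h`_i) -> dvdr d x.
have J_ideal : is_ideal J.
  split; first by move=> d _; apply: dvdr0.
    by move=> x y Jx Jy d dh; apply: dvdrD; [apply: Jx | apply: Jy].
  by move=> c x Jx d dh; apply/dvdr_mull/Jx.
have [c J_dvdr] := hPID J_ideal.
have [g hE] : exists g, h = c *: g.
  by apply: coefs_dvdr_scale => i; apply/J_dvdr => d; apply.
have c0 : c != 0 by apply: contra_neq h0 => c0; rewrite hE c0 scale0r.
exists c, g; split=> // d dg; apply: (mul_dvdr_unit c0).
apply: (proj2 (J_dvdr c) (dvdrr c)) => i.
by rewrite hE coefZ; have [t ->] := dg i; exists t; ring.
Qed.

Lemma primitiveM g h : primitive g -> primitive h -> primitive (g * h).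
Proof.
move=> pg ph d /coefs_dvdr_scale [f ghE].
have [d0|d0] := eqVneq d 0.
  have := mulf_neq0 (primitive_neq0 pg) (primitive_neq0 ph).
  by rewrite ghE d0 scale0r eqxx.
have [h' hE _] := gauss_primitive pg d0 (esym ghE).
by apply: ph => i; rewrite hE coefZ; apply: dvdr_mulIl.
Qed.

Lemma primitive1 : primitive (1 : RX).
Proof. by move=> d /(_ 0%N); rewrite coefC eqxx => /dvdr_unit; apply; apply: unitr1. Qed.

Lemma primitiveX g k : primitive g -> primitive (g ^+ k).
Proof.
move=> pg; elim: k => [|k IH]; first by rewrite expr0; apply: primitive1.
by rewrite exprS; apply: primitiveM.
Qed.

Lemma primitive_prod (I : Type) (s : seq I) (F : I -> RX) :
  (forall i, primitive (F i)) -> primitive (\prod_(i <- s) F i).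
Proof. by move=> pF; elim/big_ind: _ => //; [apply: primitive1 | apply: primitiveM]. Qed.

Lemma irreducible_primitive (p : RX) : irreducible_elt p -> (1 < size p)%N -> primitive p.
Proof.
move=> [p0 pNU p_irr] sp d /coefs_dvdr_scale [p' pE].
have := p_irr d%:P p'; rewrite mul_polyC => /(_ pE) [|].
  by rewrite poly_unitE coefC eqxx => /andP[].
rewrite poly_unitE => /andP[/eqP sp' _].
by move: sp; rewrite pE => /leq_trans/(_ (size_scale_leq d p')); rewrite sp'.
Qed.

Lemma primitive_scale_eq a b g1 g2 : primitive g1 -> primitive g2 -> a != 0 ->
  a *: g1 = b *: g2 -> exists2 u, u \is a GRing.unit & g1 = u *: g2.
Proof.
move=> pg1 pg2 a0 E.
have [h' bE g1E] : exists2 h', b%:P = a *: h' & g1 = g2 * h'.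
  by apply: gauss_primitive; rewrite // E -mul_polyC mulrC.
have [u h'E] : exists u, h' = u%:P.
  exists h'`_0; apply: size1_polyC.
  by rewrite -(size_scale h' a0) -bE size_polyC leq_b1.
have g1E' : g1 = u *: g2 by rewrite g1E h'E mulrC mul_polyC.
exists u => //.
by apply: pg1 => i; rewrite g1E' coefZ; apply: dvdr_mulIl.
Qed.

Lemma unit_polyC (p : RX) : p \is a GRing.unit -> exists u, p = u%:P.
Proof.
by rewrite poly_unitE => /andP[/eqP sp _]; exists p`_0; apply: size1_polyC; rewrite sp.
Qed.

Lemma coprime_primitive_polyC g a : primitive g -> a != 0 -> coprime_elt g a%:P.
Proof.
move=> pg a0 d [e gE] [c aE].
have [u dE] : exists u, d = u%:P.
  exists d`_0; apply: size1_polyC; have <- : size a%:P = 1%N by rewrite size_polyC a0.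
  by apply: dvdp_leq; rewrite ?polyC_eq0 // aE dvdp_mulIr.
rewrite dE; apply: rmorph_unit; apply: pg => i.
by rewrite gE dE mulrC mul_polyC coefZ; apply: dvdr_mulIl.
Qed.

End Content.

Section PolynomialPrimes.
Variable R : idomainType.
Hypothesis hPID : principal_ideal_ring R.

Lemma irreducible_poly_prime (p : {poly R}) :
  irreducible_elt p -> (1 < size p)%N -> prime_elt p.
Proof.
move=> p_irr sp; have pp := irreducible_primitive p_irr sp.
have [p0 pNU p_fact] := p_irr; split=> // f g [k fgE].
have [pf|pNf] := classic (dvdr p f); [by left | right].
pose J h := exists s t, h = s * p + t * f.
have Jp : J p by exists 1, 0; ring.
have Jf : J f by exists 0, 1; ring.
have [n [h [Jh h0 <-]] h_min] :
    exists2 n, (exists h, [/\ J h, h != 0 & size h = n]) &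
      forall m, (exists h, [/\ J h, h != 0 & size h = m]) -> (n <= m)%N.
  by apply: classic_ex_minn; exists (size p), p.
(* h has minimal size in the ideal (p, f), so pseudo-division by h is exact on it. *)
have h_dvd y : J y -> dvdr h (lead_coef h ^+ scalp y h *: y).
  move=> [s [t yE]]; have := Pdiv.Idomain.divp_eq y h.
  set l := lead_coef h ^+ _; set d := y %/ h; set r := y %% h => lyE.
  have [r0|r0] := eqVneq r 0; first by rewrite lyE r0 addr0; apply: dvdr_mulIr.
  exfalso; have := ltn_modpN0 y h0; rewrite -/r ltnNge => /negP; apply; apply: h_min.
  exists r; split => //; have [s1 [t1 hE]] := Jh.
  exists (l *: s - d * s1), (l *: t - d * t1).
  have -> : r = l *: y - d * h by rewrite lyE addrC addKr.
  by rewrite yE hE -!mul_polyC; ring.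
(* The primitive part of h divides p and f, so it is a unit and h is constant. *)
have [c [h' [c0 ph' hE]]] := content_decomposition hPID h0.
have h'_dvd y : J y -> dvdr h' y.
  move=> /h_dvd/(dvdr_trans _) h_ly.
  apply: (primitive_dvdr_scale hPID ph' (Pdiv.Idomain.lc_expn_scalp_neq0 y h)).
  by apply: h_ly; exists c%:P; rewrite hE mul_polyC.
have [W pE] := h'_dvd p Jp.
have [WU|h'U] := p_fact W h' pE.
  by case: pNf; apply: dvdr_trans (h'_dvd f Jf); exists W^-1; rewrite pE mulKr.
have [u h'E] := unit_polyC h'U.
have hC : h = (c * u)%:P by rewrite hE h'E -mul_polyC -polyCM.
have cu0 : c * u != 0 by rewrite -polyC_eq0 -hC.
apply: (primitive_dvdr_scale hPID pp cu0); have [s [t hst]] := Jh.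
exists (s * g + t * k); rewrite -mul_polyC -hC hst mulrDl -[t * f * g]mulrA fgE; ring.
Qed.

End PolynomialPrimes.

(** * The Ore algebra *)

Section Sigma.
Variable R : idomainType.
Variables gamma tau : R.
Hypothesis hgamma : gamma \is a GRing.unit.
Local Notation RX := {poly R}.
Local Notation sigma := (sigmaP gamma tau).
Local Notation sigma_inv := (sigmaPinv gamma tau).
Local Notation sigma_n := (sigma_int gamma tau).

Lemma sigmaPK : cancel sigma sigma_inv.
Proof.
move=> p; rewrite /sigmaPinv /sigmaP -comp_polyA comp_polyD comp_polyM !comp_polyC.
by rewrite comp_polyX mulrA -polyCM mulrV // mul1r addrNK comp_polyXr.
Qed.

Lemma sigmaPinvK : cancel sigma_inv sigma.
Proof.
move=> p; rewrite /sigmaPinv /sigmaP -comp_polyA comp_polyM comp_polyB !comp_polyC.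
by rewrite comp_polyX addrK mulrA -polyCM mulVr // mul1r comp_polyXr.
Qed.

Lemma sigmaP_primitive p : primitive p -> primitive (sigma p).
Proof.
move=> pp d /coefs_dvdr_scale [h pE]; apply: pp => i.
by rewrite -[p]sigmaPK pE /sigmaPinv comp_polyZ coefZ; apply: dvdr_mulIl.
Qed.

Lemma sigma_int_comp n : exists q, forall p : RX, sigma_n n p = p \Po q.
Proof.
have iter_comp (q : RX) m : exists q', forall p, iter m (comp_poly q) p = p \Po q'.
  elim: m => [|m [q' IH]]; first by exists 'X => p; rewrite comp_polyXr.
  by exists (q' \Po q) => p; rewrite /= IH comp_polyA.
by case: n => m; apply: iter_comp.
Qed.

Lemma sigma_intM n p q : sigma_n n (p * q) = sigma_n n p * sigma_n n q.
Proof. by have [r rE] := sigma_int_comp n; rewrite !rE comp_polyM. Qed.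

Lemma sigma_intC n c : sigma_n n c%:P = c%:P.
Proof. by have [r rE] := sigma_int_comp n; rewrite rE comp_polyC. Qed.

Lemma sigma_intZ n c p : sigma_n n (c *: p) = c *: sigma_n n p.
Proof. by rewrite -!mul_polyC sigma_intM sigma_intC. Qed.

Lemma sigma_int_inj n : injective (sigma_n n).
Proof.
have iter_inj (f : RX -> RX) k : injective f -> injective (iter k f).
  by move=> f_inj; elim: k => // k IH p q /= /f_inj /IH.
by case: n => m; apply/iter_inj/can_inj; [apply: sigmaPK | apply: sigmaPinvK].
Qed.

Lemma sigma_int_eq0 n p : (sigma_n n p == 0) = (p == 0).
Proof.
have s0 : sigma_n n 0 = 0 by have [q ->] := sigma_int_comp n; rewrite comp_poly0.
by apply/eqP/eqP => [|->//]; rewrite -{1}s0 => /sigma_int_inj.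
Qed.

Lemma sigma_int_sigmaP n p : sigma_n n (sigma p) = sigma_n (n + 1) p.
Proof.
case: n => [m|[|m]] /=.
- by rewrite addn1 iterSr.
- by rewrite sigmaPK.
- by rewrite subn1 /= -!iterS iterSr sigmaPK.
Qed.

Lemma sigmaP_eq0 p : (sigma p == 0) = (p == 0).
Proof. exact: (sigma_int_eq0 1). Qed.

End Sigma.

Lemma fraction_repr (A : idomainType) (x : {fraction A}) :
  exists n d, d != 0 /\ x * FracField.tofrac d = FracField.tofrac n.
Proof.
elim/quotW: x => r; exists r.1, r.2; split; first exact: denom_ratioP.
rewrite /FracField.tofrac; unlock; rewrite -[_ * _]/(FracField.mul _ _) -FracField.pi_mul.
apply/eqmodP; rewrite /= FracField.equivfE /FracField.mulf.
by rewrite !numden_Ratio ?mulf_neq0 ?oner_neq0 ?denom_ratioP // !mulr1 mulrC.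
Qed.

Lemma tofrac_inj (A : idomainType) : injective (@FracField.tofrac A).
Proof. by move=> x y /eqP; rewrite tofrac_eq => /eqP. Qed.

Lemma tofrac_eq_div (A : idomainType) (x a b1 b2 l : A) : b1 != 0 -> b2 != 0 ->
  (FracField.tofrac x = FracField.tofrac a / (FracField.tofrac b1 * FracField.tofrac b2)
     * FracField.tofrac l) <-> x * (b1 * b2) = a * l.
Proof.
move=> b10 b20; rewrite -rmorphM mulrAC -rmorphM.
have b0 : FracField.tofrac (b1 * b2) != 0 by rewrite tofrac_eq0 mulf_neq0.
split=> [E|<-]; last by rewrite rmorphM mulfK.
by apply/eqP; rewrite -tofrac_eq -(divfK b0 (FracField.tofrac (a * l))) -E rmorphM.
Qed.

Section OreAlgebra.
Variable R : idomainType.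
Variables gamma tau : R.
Hypothesis hgamma : gamma \is a GRing.unit.
Variable delta : {poly R} -> {poly R}.
Hypothesis delta_add : forall p q, delta (p + q) = delta p + delta q.
Hypothesis delta_leib :
  forall p q, delta (p * q) = sigmaP gamma tau p * delta q + delta p * q.
Local Notation RX := {poly R}.
Local Notation sigma := (sigmaP gamma tau).
Local Notation dM := (dmul gamma tau delta).

Lemma delta0 : delta 0 = 0.
Proof.
have := delta_add 0 0; rewrite addr0 => /(congr1 (fun x => x - delta 0)).
by rewrite subrr addrK.
Qed.

Lemma map_poly_morphD (f : RX -> RX) (P Q : {poly RX}) : f 0 = 0 ->
  {morph f : p q / p + q} -> map_poly f (P + Q) = map_poly f P + map_poly f Q.
Proof. by move=> f0 fD; apply/polyP => i; rewrite coefD !coef_map_id0 // coefD fD. Qed.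

Lemma dmulD P Q : dM (P + Q) = dM P + dM Q.
Proof.
rewrite /dmul (map_poly_morphD _ _ delta0 delta_add).
by rewrite (map_poly_morphD _ _ (comp_poly0 _) (fun p q => comp_polyD p q _)); ring.
Qed.

Lemma dmul_sum (I : Type) (s : seq I) (F : I -> {poly RX}) :
  dM (\sum_(i <- s) F i) = \sum_(i <- s) dM (F i).
Proof.
have dmul0 : dM 0 = 0 by rewrite /dmul !map_poly0 mulr0 addr0.
exact: (big_morph _ dmulD dmul0).
Qed.

Lemma dmulZ f Q : dM (f *: Q) = sigma f *: dM Q + delta f *: Q.
Proof.
rewrite /dmul; have sigma0 : sigma 0 = 0 := comp_poly0 _.
have -> : map_poly sigma (f *: Q) = sigma f *: map_poly sigma Q.
  by apply/polyP => i; rewrite coefZ !coef_map_id0 // coefZ /sigmaP comp_polyM.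
have -> : map_poly delta (f *: Q) = sigma f *: map_poly delta Q + delta f *: Q.
  by apply/polyP => i; rewrite coefD !coefZ !coef_map_id0 ?delta0 // coefZ delta_leib.
by rewrite scalerDr scalerAr addrA.
Qed.

Lemma size_dmul Q : Q != 0 ->
  size (dM Q) = (size Q).+1 /\ lead_coef (dM Q) = sigma (lead_coef Q).
Proof.
move=> Q0; have sigma0 : sigma 0 = 0 := comp_poly0 _.
have lc_sigma : sigma (lead_coef Q) != 0 by rewrite (sigmaP_eq0 tau hgamma) lead_coef_eq0.
have sQ : size (map_poly sigma Q) = size Q by apply: size_map_poly_id0.
have sXQ : size ('X * map_poly sigma Q) = (size Q).+1.
  by rewrite mulrC size_mulX -?size_poly_eq0 sQ ?size_poly_eq0.
have s_delta : (size (map_poly delta Q) < (size Q).+1)%N by rewrite ltnS size_poly.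
rewrite /dmul size_addl ?sXQ //; split=> //.
by rewrite lead_coefDl ?sXQ // mulrC lead_coefMX lead_coef_map_id0.
Qed.

Lemma size_iter_dmul L i : L != 0 -> size (iter i dM L) = (size L + i)%N.
Proof.
move=> L0; elim: i => [|i IH]; first by rewrite addn0.
have Li0 : iter i dM L != 0 by rewrite -size_poly_eq0 IH addn_eq0 size_poly_eq0 (negbTE L0).
by rewrite /= (size_dmul Li0).1 IH addnS.
Qed.

Local Notation K := {fraction RX}.
Local Notation toK := (@FracField.tofrac RX).
Local Notation mapK := (map_poly toK).

Lemma mapK_inj : injective mapK.
Proof. exact: map_inj_poly (@tofrac_inj _) (rmorph0 _). Qed.

Lemma clear_denominators (P : {poly K}) :
  exists2 q : RX, q != 0 & exists Pt, mapK Pt = toK q *: P.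
Proof.
elim/poly_ind: P => [|P c [q q0 [Pt PtE]]].
  by exists 1; rewrite ?oner_neq0 //; exists 0; rewrite rmorph0 scaler0.
have [n [d [d0 cE]]] := fraction_repr c.
exists (q * d); first by rewrite mulf_neq0.
exists (d *: (Pt * 'X) + (q * n)%:P).
rewrite rmorphD /= map_polyZ rmorphM /= map_polyX PtE map_polyC /=.
rewrite scalerDr -scalerAl scalerA scale_polyC !rmorphM /= -cE.
by rewrite -!polyCM [tofrac d * _]mulrC [c * _]mulrC mulrA.
Qed.

Variable L : {poly RX}.
Local Notation oreL P := (oreMul gamma tau delta P L).
Local Notation cont T := (in_cont gamma tau delta L T).
Implicit Types (P Q : {poly K}) (c : K).

Lemma oreMulE n P : (size P <= n)%N ->
  oreL P = \sum_(i < n) P`_i *: mapK (iter i dM L).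
Proof.
move=> Pn; rewrite /oreMul (big_ord_widen _ (fun i => P`_i *: mapK (iter i dM L)) Pn).
rewrite big_mkcond /=; apply: eq_bigr => i _.
by case: ltnP => // Pi; rewrite nth_default ?scale0r.
Qed.

Lemma oreMulD P Q : oreL (P + Q) = oreL P + oreL Q.
Proof.
rewrite (oreMulE (leq_maxl (size P) (size Q))) (oreMulE (leq_maxr (size P) (size Q))).
rewrite (oreMulE (size_add P Q)) -big_split /=.
by apply: eq_bigr => i _; rewrite coefD scalerDl.
Qed.

Lemma oreMulZ c P : oreL (c *: P) = c *: oreL P.
Proof.
rewrite (oreMulE (size_scale_leq c P)) /oreMul scaler_sumr.
by apply: eq_bigr => i _; rewrite coefZ scalerA.
Qed.

Lemma oreMulXn i : oreL 'X^i = mapK (iter i dM L).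
Proof.
rewrite (oreMulE (n := i.+1)) ?size_polyXn // big_ord_recr /= big1 ?add0r.
  by rewrite coefXn eqxx scale1r.
by move=> j _; rewrite coefXn ltn_eqF ?scale0r.
Qed.

Lemma oreMul_map (Pt : {poly RX}) :
  oreL (mapK Pt) = mapK (\sum_(i < size Pt) Pt`_i *: iter i dM L).
Proof.
rewrite (oreMulE (n := size Pt)) ?size_poly // rmorph_sum /=.
by apply: eq_bigr => i _; rewrite map_polyZ coef_map.
Qed.

Lemma size_oreMul P : L != 0 -> P != 0 -> size (oreL P) = (size P + (size L).-1)%N.
Proof.
move=> L0 P0; have sL : size L = (size L).-1.+1 by rewrite prednK // size_poly_gt0.
have sM i : size (mapK (iter i dM L)) = ((size L).-1 + i).+1.
  by rewrite (size_map_inj_poly (@tofrac_inj _)) ?rmorph0 // size_iter_dmul // -addSn -sL.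
have [n sPn] : exists n, size P = n.+1 by exists (size P).-1; rewrite prednK // size_poly_gt0.
have Pn0 : P`_n != 0 by rewrite -lead_coef_eq0 lead_coefE sPn in P0.
rewrite /oreMul sPn big_ord_recr /= addrC size_addl size_scale // sM.
  by rewrite addnC addSn.
rewrite ltnS; apply: (leq_trans (size_sum _ _ _)); apply/bigmax_leqP => i _.
by rewrite (leq_trans (size_scale_leq _ _)) // sM ltn_add2l.
Qed.

Lemma in_contD T1 T2 : cont T1 -> cont T2 -> cont (T1 + T2).
Proof. by move=> [P1 E1] [P2 E2]; exists (P1 + P2); rewrite rmorphD /= E1 E2 oreMulD. Qed.

Lemma in_contZ f T : cont T -> cont (f *: T).
Proof. by move=> [P E]; exists (toK f *: P); rewrite map_polyZ E oreMulZ. Qed.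

Lemma oreMul0 : oreL 0 = 0.
Proof. by rewrite /oreMul size_poly0 big_ord0. Qed.

Lemma in_cont_sum (I : Type) (s : seq I) (F : I -> {poly RX}) :
  (forall i, cont (F i)) -> cont (\sum_(i <- s) F i).
Proof.
move=> contF; elim/big_ind: _ => //; last exact: in_contD.
by exists 0; rewrite rmorph0 oreMul0.
Qed.

Lemma in_cont_iter_dmul i : cont (iter i dM L).
Proof. by exists 'X^i; rewrite oreMulXn. Qed.

Lemma in_cont_scale_cancel f T : f != 0 -> cont (f *: T) -> cont T.
Proof.
move=> f0 [P E]; exists ((toK f)^-1 *: P).
by rewrite oreMulZ -E map_polyZ scalerA mulVf ?scale1r // tofrac_eq0.
Qed.

Lemma in_cont_dmul T : cont T -> cont (dM T).
Proof.
(* With denominators cleared, q T is an R[x]-combination of the iterates of L. *)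
move=> [P TE]; have [q q0 [Pt PtE]] := clear_denominators P.
have qT : q *: T = \sum_(i < size Pt) Pt`_i *: iter i dM L.
  by apply: mapK_inj; rewrite map_polyZ TE -oreMulZ -PtE oreMul_map.
apply: (in_cont_scale_cancel (f := sigma q)); first by rewrite (sigmaP_eq0 tau hgamma).
have -> : sigma q *: dM T = dM (q *: T) + (- delta q) *: T by rewrite dmulZ scaleNr addrK.
apply: in_contD; last by apply: in_contZ; exists P.
rewrite qT dmul_sum; apply: in_cont_sum => i; rewrite dmulZ.
apply: in_contD; apply: in_contZ; last exact: in_cont_iter_dmul.
exact: (in_cont_iter_dmul i.+1).
Qed.

Lemma in_cont_size T P : L != 0 -> T != 0 -> mapK T = oreL P ->
  P != 0 /\ size T = (size P + (size L).-1)%N.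
Proof.
move=> L0 T0 TE; have P0 : P != 0.
  apply: contra_neq T0 => P0; apply: mapK_inj.
  by rewrite TE P0 rmorph0 oreMul0.
by split=> //; rewrite -(size_map_inj_poly (@tofrac_inj _) (rmorph0 _) T) TE size_oreMul.
Qed.

End OreAlgebra.

(** * Desingularized operators *)

Lemma lead_coefD_same (A : nzRingType) (p q : {poly A}) :
  size p = size q -> lead_coef p + lead_coef q != 0 ->
  size (p + q) = size p /\ lead_coef (p + q) = lead_coef p + lead_coef q.
Proof.
move=> spq lc0.
have coef_n : (p + q)%R`_(size p).-1 = lead_coef p + lead_coef q.
  by rewrite coefD /lead_coef spq.
have s_le : (size (p + q)%R <= size p)%N by rewrite (leq_trans (size_add _ _)) // -spq maxnn.
have s_ge : (size p <= size (p + q)%R)%N.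
  rewrite leqNgt; apply: contra lc0 => lt; have sp0 := leq_ltn_trans (leq0n _) lt.
  by rewrite -coef_n nth_default // -ltnS prednK.
have sE : size (p + q) = size p by apply/eqP; rewrite eqn_leq s_le s_ge.
by split=> //; rewrite /lead_coef sE.
Qed.

Section Desingularization.
Variable R : idomainType.
Hypothesis hPID : principal_ideal_ring R.
Variables gamma tau : R.
Hypothesis hgamma : gamma \is a GRing.unit.
Variable delta : {poly R} -> {poly R}.
Hypothesis delta_add : forall p q, delta (p + q) = delta p + delta q.
Hypothesis delta_leib :
  forall p q, delta (p * q) = sigmaP gamma tau p * delta q + delta p * q.
Local Notation RX := {poly R}.
Local Notation sigma := (sigmaP gamma tau).
Local Notation sigma_n := (sigma_int gamma tau).
Local Notation dM := (dmul gamma tau delta).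
Local Notation toK := (@FracField.tofrac RX).
Variable L : {poly RX}.
Hypothesis L0 : L != 0.
Local Notation cont T := (in_cont gamma tau delta L T).
Local Notation desing T := (desingularized gamma tau delta L T).
Implicit Types (T : {poly RX}) (a b c x : R).

Definition shifted_lc T : RX := sigma_n ((size L).-1%:Z - (size T).-1%:Z) (lead_coef T).

(* The bound on lc T required by [desingularized], with denominators cleared. *)
Definition lc_bound T a b (Pi : RX) : Prop := shifted_lc T * (b%:P * Pi) = a%:P * lead_coef L.

Lemma lc_boundP T a b (Pi : RX) : b != 0 -> Pi != 0 ->
  toK (shifted_lc T) = toK a%:P / (toK b%:P * toK Pi) * toK (lead_coef L) <->
  lc_bound T a b Pi.
Proof. by move=> b0 Pi0; apply: tofrac_eq_div; rewrite ?polyC_eq0. Qed.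

Lemma primitive_prod_irreducible m (ps : 'I_m -> RX) (ks : 'I_m -> nat) :
  (forall i, irreducible_elt (ps i) /\ (1 < size (ps i))%N) ->
  primitive (\prod_(i < m) ps i ^+ ks i).
Proof.
move=> ps_irr; apply: (primitive_prod hPID) => i; have [irr_i s_i] := ps_irr i.
exact/(primitiveX hPID)/irreducible_primitive.
Qed.

Lemma lc_bound_numer_neq0 T a b (Pi : RX) : T != 0 -> b != 0 -> Pi != 0 ->
  lc_bound T a b Pi -> a != 0.
Proof.
move=> T0 b0 Pi0 E; apply: contra_neq (_ : shifted_lc T * (b%:P * Pi) != 0) => [a0|].
  by rewrite E a0 mul0r.
by rewrite !mulf_neq0 ?polyC_eq0 // (sigma_int_eq0 tau hgamma) lead_coef_eq0.
Qed.

Lemma removable_of_lc_bound T (p Q : RX) a b : T != 0 -> cont T -> primitive p ->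
  dvdr p (lead_coef L) -> a != 0 -> b != 0 -> Q != 0 ->
  lc_bound T a b (Q * p) -> exists k, removable_at gamma tau delta L k p.
Proof.
move=> T0 [P TE] pp pL a0 b0 Q0 E; have [P0 sT] := in_cont_size hgamma L0 T0 TE.
exists (size P).-1; split=> //; exists P, T, a%:P, (b%:P * Q).
have shiftE : (size L).-1%:Z - (size T).-1%:Z = - (size P).-1%:Z.
  by rewrite sT; move: P0; rewrite -size_poly_eq0; case: (size P) => // n _; lia.
split=> //; first by rewrite prednK // size_poly_gt0.
- exact: coprime_primitive_polyC.
- by rewrite mulf_neq0 ?polyC_eq0.
apply/tofrac_eq_div; rewrite ?mulf_neq0 ?polyC_eq0 ?(primitive_neq0 pp) //.
by rewrite -shiftE -mulrA.
Qed.

Lemma lc_bound_dvdr_prod T (Pi : RX) a b c m (ps : 'I_m -> RX) (es ks : 'I_m -> nat) :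
  lead_coef L = c%:P * \prod_(i < m) ps i ^+ es i ->
  (forall i, irreducible_elt (ps i) /\ (1 < size (ps i))%N) ->
  (forall i d, (ks i < d)%N -> non_removable gamma tau delta L (ps i ^+ d)) ->
  T != 0 -> cont T -> b != 0 -> primitive Pi -> lc_bound T a b Pi ->
  dvdr Pi (\prod_(i < m) ps i ^+ ks i).
Proof.
move=> lcE ps_irr nonrem T0 contT b0 pPi E.
have Pi0 := primitive_neq0 pPi; have a0 := lc_bound_numer_neq0 T0 b0 Pi0 E.
have Pi_lcL : dvdr Pi (lead_coef L).
  apply: (primitive_dvdr_scale hPID pPi a0); exists (shifted_lc T * b%:P).
  by rewrite -mul_polyC -E mulrA.
have c0 : c != 0 by apply: contraTneq L0 => c0; rewrite negbK -lead_coef_eq0 lcE c0 mul0r.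
have Pi_prod : dvdr Pi (\prod_(i < m) ps i ^+ es i).
  by apply: (primitive_dvdr_scale hPID pPi c0); rewrite -mul_polyC -lcE.
have ps_prime i : prime_elt (ps i) by have [] := ps_irr i; apply: irreducible_poly_prime.
have ps0 i : ps i != 0 by have [[]] := ps_irr i.
(* A factor ps i ^+ (ks i).+1 of Pi would make this power removable. *)
have Pi_max i : ~ dvdr (ps i ^+ (ks i).+1) Pi.
  move=> [Q PiE]; apply: (nonrem i _ (ltnSn _)); have [irr_i s_i] := ps_irr i.
  apply: (removable_of_lc_bound (Q := Q) T0 contT _ _ a0 b0).
  - exact/(primitiveX hPID)/irreducible_primitive.
  - by apply: dvdr_trans Pi_lcL; rewrite PiE; apply: dvdr_mulIr.
  - by apply: contra_neq Pi0 => Q0; rewrite PiE Q0 mul0r.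
  - by rewrite -PiE.
rewrite -[X in dvdr _ X]mulr1; apply: (dvdr_big_expn_drop (e := es) ps_prime ps0 Pi_max).
by rewrite mulr1.
Qed.

Lemma desingularized_proportional T T' alpha beta : desing T -> T' != 0 -> cont T' ->
  alpha != 0 -> alpha *: shifted_lc T' = beta *: shifted_lc T -> desing T'.
Proof.
move=> [_ [_ [c [m [ps [es [lcE es_pos ps_irr ps_cop [a [b [ks [b0 bound nonrem]]]]]]]]]]].
move=> T'0 contT' alpha0 E; do 2!split=> //; exists c, m, ps, es; split=> //.
exists (beta * a), (alpha * b), ks; split=> //; first by rewrite mulf_neq0.
have Pi0 := primitive_neq0 (primitive_prod_irreducible (ks := ks) ps_irr).
have {}bound := (lc_boundP _ _ b0 Pi0).1 bound.
apply/lc_boundP; rewrite ?mulf_neq0 //.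
transitivity ((alpha *: shifted_lc T') * (b%:P * \prod_(i < m) ps i ^+ ks i)).
  by rewrite -mul_polyC polyCM; ring.
by rewrite E -mul_polyC -mulrA bound polyCM mulrA.
Qed.

Lemma shifted_lc_scale c T : c != 0 -> shifted_lc (c%:P *: T) = c *: shifted_lc T.
Proof.
move=> c0; rewrite /shifted_lc size_scale ?polyC_eq0 // lead_coefZ.
by rewrite sigma_intM sigma_intC mul_polyC.
Qed.

Lemma desingularized_scale c T : c != 0 -> desing T -> desing (c%:P *: T).
Proof.
move=> c0 dT; have [T0 [contT _]] := dT.
apply: (desingularized_proportional (alpha := 1) (beta := c) dT).
- by rewrite scale_poly_eq0 negb_or polyC_eq0 c0.
- exact: in_contZ.
- exact: oner_neq0.
- by rewrite scale1r shifted_lc_scale.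
Qed.

Lemma shifted_lc_dmul T : T != 0 -> shifted_lc (dM T) = shifted_lc T.
Proof.
move=> T0; rewrite /shifted_lc; have [-> ->] := size_dmul tau hgamma delta T0.
have sT : (0 < size T)%N by rewrite size_poly_gt0.
have nE : (size L).-1%:Z - (size T).+1.-1%:Z + 1 = (size L).-1%:Z - (size T).-1%:Z.
  by move: sT; case: (size T) => // n _; lia.
by rewrite (sigma_int_sigmaP tau hgamma) nE.
Qed.

Lemma desingularized_dmul T : desing T -> desing (dM T).
Proof.
move=> dT; have [T0 [contT _]] := dT.
apply: (desingularized_proportional (alpha := 1) (beta := 1) dT).
- by rewrite -size_poly_eq0 (size_dmul tau hgamma delta T0).1.
- exact: in_cont_dmul.
- exact: oner_neq0.
- by rewrite shifted_lc_dmul.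
Qed.

Lemma desingularized_raise T x n : desing T -> is_content x (lead_coef T) -> (size T <= n)%N ->
  exists T', [/\ desing T', is_content x (lead_coef T') & size T' = n].
Proof.
move=> dT cT /subnK <-; elim: (n - size T)%N => [|j [T' [dT' [g [pg gE]] sT']]].
  by exists T.
have [T'0 _] := dT'; have [sz lc] := size_dmul tau hgamma delta T'0.
exists (dM T'); split; first exact: desingularized_dmul.
  by exists (sigma g); split; [apply: sigmaP_primitive | rewrite lc gE /sigmaP comp_polyZ].
by rewrite sz sT' addSn.
Qed.

Lemma desingularized_lc_assoc T1 T2 x1 x2 g1 g2 : desing T1 -> desing T2 ->
  size T1 = size T2 -> primitive g1 -> primitive g2 ->
  lead_coef T1 = x1 *: g1 -> lead_coef T2 = x2 *: g2 ->
  exists2 u, u \is a GRing.unit & g1 = u *: g2.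
Proof.
move=> [T10 [cont1 [c1 [m1 [ps1 [es1 [lcE1 _ irr1 _ [a1 [b1 [ks1 [b10 bound1 nonrem1]]]]]]]]]]].
move=> [T20 [cont2 [c2 [m2 [ps2 [es2 [lcE2 _ irr2 _ [a2 [b2 [ks2 [b20 bound2 nonrem2]]]]]]]]]]].
move=> sz pg1 pg2 lc1 lc2.
have pPi1 := primitive_prod_irreducible (ks := ks1) irr1.
have pPi2 := primitive_prod_irreducible (ks := ks2) irr2.
set Pi1 := \prod_(i < m1) _ in pPi1 bound1; set Pi2 := \prod_(i < m2) _ in pPi2 bound2.
move: (primitive_neq0 pPi1) (primitive_neq0 pPi2) => Pi10 Pi20.
have {}bound1 := (lc_boundP _ _ b10 Pi10).1 bound1.
have {}bound2 := (lc_boundP _ _ b20 Pi20).1 bound2.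
have a20 := lc_bound_numer_neq0 T20 b20 Pi20 bound2.
have Pi21 := lc_bound_dvdr_prod lcE1 irr1 nonrem1 T20 cont2 b20 pPi2 bound2.
have [s Pi2E] := lc_bound_dvdr_prod lcE2 irr2 nonrem2 T10 cont1 b10 pPi1 bound1.
rewrite -/Pi1 -/Pi2 in Pi21 Pi2E.
have [s0 sE] : exists s0, s = s0%:P.
  by apply: unit_polyC; apply: (mul_dvdr_unit Pi10); rewrite -Pi2E.
have x10 : x1 != 0.
  by apply: contraTneq T10 => x10; rewrite negbK -lead_coef_eq0 lc1 x10 scale0r.
have E : shifted_lc T1 * (b1 * a2)%:P = shifted_lc T2 * (b2 * s0 * a1)%:P.
  apply: (mulIf Pi10); transitivity (a1%:P * lead_coef L * a2%:P).
    by rewrite -bound1 polyCM; ring.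
  transitivity (a2%:P * lead_coef L * a1%:P); first ring.
  by rewrite -bound2 Pi2E sE !polyCM; ring.
apply: (@primitive_scale_eq _ hPID (x1 * (b1 * a2)) (x2 * (b2 * s0 * a1)) _ _ pg1 pg2).
  by rewrite !mulf_neq0.
apply: (sigma_int_inj (tau := tau) hgamma (n := (size L).-1%:Z - (size T1).-1%:Z)).
rewrite /shifted_lc -sz lc1 lc2 !sigma_intZ in E *; rewrite -!mul_polyC !polyCM in E *.
by transitivity (x1%:P * sigma_n ((size L).-1%:Z - (size T1).-1%:Z) g1 * (b1%:P * a2%:P));
  [ring | rewrite E; ring].
Qed.

Lemma desingularized_add T1 T2 x1 x2 : desing T1 -> desing T2 ->
  is_content x1 (lead_coef T1) -> is_content x2 (lead_coef T2) ->
  size T1 = size T2 -> x1 + x2 != 0 ->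
  exists T, desing T /\ is_content (x1 + x2) (lead_coef T).
Proof.
move=> dT1 dT2 [g1 [pg1 lc1]] [g2 [pg2 lc2]] sz x0.
have [u uU g1E] := desingularized_lc_assoc dT1 dT2 sz pg1 pg2 lc1 lc2.
have u0 : u%:P != 0 by rewrite polyC_eq0; apply: contraTneq uU => ->; rewrite unitr0.
have lc12 : lead_coef T1 + lead_coef (u%:P *: T2) = (x1 + x2) *: g1.
  by rewrite lead_coefZ lc1 lc2 g1E -!mul_polyC polyCD; ring.
pose T := T1 + u%:P *: T2.
have g10 := primitive_neq0 pg1.
have [sT lcT] : size T = size T1 /\ lead_coef T = (x1 + x2) *: g1.
  rewrite -lc12; apply: lead_coefD_same; first by rewrite size_scale.
  by rewrite lc12 scale_poly_eq0 negb_or x0.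
have [[T10 [cont1 _]] [_ [cont2 _]]] := (dT1, dT2).
have x10 : x1 != 0.
  by apply: contraTneq T10 => x10; rewrite negbK -lead_coef_eq0 lc1 x10 scale0r.
exists T; split; last by exists g1.
apply: (desingularized_proportional (alpha := x1) (beta := x1 + x2) dT1) => //.
- by rewrite -lead_coef_eq0 lcT scale_poly_eq0 negb_or x0.
- by apply: in_contD => //; apply: in_contZ.
- by rewrite /shifted_lc sT lcT lc1 !sigma_intZ !scalerA mulrC.
Qed.

Definition desingularized_contents c : Prop :=
  c = 0 \/ exists T, desing T /\ is_content c (lead_coef T).

Lemma desingularized_contentsD c1 c2 :
  desingularized_contents c1 -> desingularized_contents c2 ->
  desingularized_contents (c1 + c2).
Proof.
move=> [->|[T1 [dT1 cT1]]]; first by rewrite add0r.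
move=> [->|[T2 [dT2 cT2]]]; first by rewrite addr0; right; exists T1.
have [->|c0] := eqVneq (c1 + c2) 0; [by left | right].
wlog le12 : c1 c2 T1 T2 dT1 dT2 cT1 cT2 c0 / (size T1 <= size T2)%N.
  move=> wlog_le; have [le|/ltnW le] := leqP (size T1) (size T2).
    exact: (wlog_le c1 c2 T1 T2).
  by rewrite addrC; apply: (wlog_le c2 c1 T2 T1); rewrite // addrC.
have [T1' [dT1' cT1' sT1']] := desingularized_raise dT1 cT1 le12.
exact: desingularized_add dT1' dT2 cT1' cT2 sT1' c0.
Qed.

Lemma desingularized_contentsM c x :
  desingularized_contents x -> desingularized_contents (c * x).
Proof.
move=> [->|[T [dT [g [pg lcT]]]]]; first by left; rewrite mulr0.
have [->|c0] := eqVneq c 0; first by left; rewrite mul0r.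
right; exists (c%:P *: T); split; first exact: desingularized_scale.
by exists g; split; rewrite // lead_coefZ lcT mul_polyC scalerA.
Qed.

End Desingularization.

Unset Implicit Arguments.

Theorem mainTheorem14 (R : idomainType) (hPID : principal_ideal_ring R)
  (gamma tau : R) (hgamma : gamma \is a GRing.unit)
  (delta : {poly R} -> {poly R})
  (delta_add : forall p q, delta (p + q) = delta p + delta q)
  (delta_lin : forall (c : R) p, delta (c *: p) = c *: delta p)
  (delta_leib : forall p q, delta (p * q) = sigmaP gamma tau p * delta q + delta p * q)
  (delta_deg : (size (delta 'X) <= 2)%N)
  (L : {poly {poly R}}) (r : nat) (hr : (0 < r)%N) (hL : size L = r.+1) :
  is_ideal (fun c : R => c = 0 \/
    exists T, desingularized gamma tau delta L T /\ is_content c (lead_coef T)).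
Proof.
have L0 : L != 0 by rewrite -size_poly_eq0 hL.
split; first by left.
- by move=> a b; apply: desingularized_contentsD.
- by move=> c x; apply: desingularized_contentsM.
Qed.
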